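(* Let $Q$ be a tree quiver, let $(M,x)$ be a radiation module such that $M$ is exceptional, and let $\mathcal B=\mathcal B(M,x)$ be a radiation basis. Let $y,z\in Q_0$ be neighbors with $d(x,y)+1=d(x,z)$. Then in the coefficient quiver $\Gamma(M,\mathcal B)$ every element of $\mathcal B_z$ is joined by an arrow to precisely one element of $\mathcal B_y$. If $\dim M_y\le\dim M_z$, then every element of $\mathcal B_y$ is joined by an arrow to at least one element of $\mathcal B_z$. If $\dim M_y\ge \dim M_z$, then every element of $\mathcal B_y$ is joined by an arrow to at most one element of $\mathcal B_z$.
   Context: $k$ is a field; $Q$ is a locally finite quiver whose underlying graph is a tree; $d(u,v)$ is the distance of vertices in the underlying graph; representations are finite-dimensional. A representation $M$ is exceptional if it is indecomposable and $\operatorname{Ext}^1(M,M)=0$. $S(x)$ is the simple at $x$; $Q^x$ is $Q$ with $x$ and arrows at $x$ deleted; restriction to $Q^x$ forgets $M_x$ and the maps of arrows at $x$. Coefficient quiver: for bases $\mathcal B_z$ of $M_z$, $\Gamma(M,\mathcal B)$ has vertex set the disjoint union of the $\mathcal B_z$; for an arrow $\alpha\colon u\to w$ and $b\in\mathcal B_u$ write $M_\alpha(b)=\sum_{b'\in\mathcal B_w}c_{b'b}b'$; there is an arrow $b\to b'$ labelled $\alpha$ iff $c_{b'b}\ne0$. Radiation modules (recursive): pairs $(M,x)$, $M$ indecomposable, $\dim M_x=1$. $(S(x),x)$ is one. If $M$ has length $\ge 2$, $(M,x)$ is one if the restriction of $M$ to $Q^x$ is $\bigoplus_i N(i)$ with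 $N(i)$ indecomposable, $\operatorname{Hom}(N(i),N(j))=0$ for $i\ne j$, and for each $i$ a neighbor $y(i)$ of $x$ with $(N(i),y(i))$ a radiation module. Radiation basis containing nonzero $b\in M_x$ (recursive): for $S(x)$ it is $\{b\}$; otherwise fix such a decomposition, let $\alpha_i$ be the arrow between $x$ and $y(i)$; if $\alpha_i\colon x\to y(i)$ let $b_i$ be the $N(i)_{y(i)}$-component of $M_{\alpha_i}(b)$ in $M_{y(i)}=\bigoplus_jN(j)_{y(i)}$; if $\alpha_i\colon y(i)\to x$ let $b_i\in N(i)_{y(i)}$ with $M_{\alpha_i}(b_i)=b$; then $\mathcal B(M,x)=\{b\}\cup\bigcup_i\mathcal B(N(i),y(i))$ with $\mathcal B(N(i),y(i))$ a radiation basis of $(N(i),y(i))$ containing $b_i$. $\mathcal B_z$ denotes the elements lying in $M_z$. *)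

(* Quiver representations are given concretely:
   M_z = k^(dim z) (row vectors), M_a acts by v |-> v *m mat a.
   Subspaces are {vspace 'rV[k]_n} (mathcomp vector.v). *)
From Stdlib Require List.
From HB Require Import structures.
From mathcomp Require Import all_boot all_order all_algebra.
Set Implicit Arguments. Unset Strict Implicit. Unset Printing Implicit Defensive.
Import GRing.Theory.
Local Open Scope ring_scope.

Record quiver := Quiver {
  vert : Type;
  arr : Type;
  src : arr -> vert;
  tgt : arr -> vert }.

Section Graph.
Variable Q : quiver.

(* a step of a walk in the underlying graph: (a, true) goes src a -> tgt a,
   (a, false) goes tgt a -> src a *)
Definition st_start (s : arr Q * bool) := if s.2 then src s.1 else tgt s.1.
Definition st_end (s : arr Q * bool) := if s.2 then tgt s.1 else src s.1.

Inductive walk : vert Q -> vert Q -> list (arr Q * bool) -> Prop :=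
| walk_nil u : walk u u nil
| walk_cons u w s p : u = st_start s -> walk (st_end s) w p -> walk u w (s :: p).

Fixpoint reduced (p : list (arr Q * bool)) : Prop :=
  match p with
  | s1 :: ((s2 :: _) as p') => ~ (s1.1 = s2.1 /\ s1.2 = ~~ s2.2) /\ reduced p'
  | _ => True
  end.

(* underlying graph is a tree: connected, and no cycle (a cycle, including loops
   and multiple edges, is a nonempty closed walk without backtracking) *)
Definition is_tree : Prop :=
  (forall u v, exists p, walk u v p) /\
  (forall u p, walk u u p -> reduced p -> p = nil).

Definition locally_finite : Prop :=
  forall v, exists s : list (arr Q), forall a, src a = v \/ tgt a = v -> List.In a s.

Definition adjacent (u v : vert Q) : Prop :=
  exists a, (src a = u /\ tgt a = v) \/ (src a = v /\ tgt a = u).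

Definition dist (u v : vert Q) (n : nat) : Prop :=
  (exists p, walk u v p /\ size p = n) /\ (forall p, walk u v p -> (n <= size p)%N).
End Graph.

Record rep (k : fieldType) (Q : quiver) := Rep {
  rdim : vert Q -> nat;
  mat : forall a : arr Q, 'M[k]_(rdim (src a), rdim (tgt a)) }.

Section Reps.
Variables (k : fieldType) (Q : quiver) (R : rep k Q).

Definition fin_dim : Prop :=
  exists s : list (vert Q), forall z, rdim R z <> 0%N -> List.In z s.

Definition subfam := forall z : vert Q, {vspace 'rV[k]_(rdim R z)}.
Definition full_fam : subfam := fun z => fullv.

(* U is a subrepresentation of (the restriction of) M to the full subquiver on
   the vertex set W *)
Definition is_subrep (W : vert Q -> Prop) (U : subfam) : Prop :=
  (forall z, ~ W z -> U z = 0%VS) /\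
  (forall a, W (src a) -> W (tgt a) ->
     forall v, v \in U (src a) -> v *m mat R a \in U (tgt a)).

Definition indecomposable (W : vert Q -> Prop) (U : subfam) : Prop :=
  is_subrep W U /\ (exists z, U z != 0%VS) /\
  forall U1 U2 : subfam, is_subrep W U1 -> is_subrep W U2 ->
    (forall z, W z -> (U1 z + U2 z)%VS = U z /\ directv (U1 z + U2 z)) ->
    (forall z, U1 z = 0%VS) \/ (forall z, U2 z = 0%VS).

Definition hom_zero (W : vert Q -> Prop) (U U' : subfam) : Prop :=
  forall f : forall z, 'M[k]_(rdim R z),
    (forall z, W z -> forall v, v \in U z -> v *m f z \in U' z) ->
    (forall a, W (src a) -> W (tgt a) -> forall v, v \in U (src a) ->
        v *m f (src a) *m mat R a = v *m mat R a *m f (tgt a)) ->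
    forall z, W z -> forall v, v \in U z -> v *m f z = 0.

(* Ext^1(M,M) = 0: the standard (Ringel) map
   (f_z)_z |-> (f_{sa} M_a - M_a f_{ta})_a, whose cokernel is Ext^1(M,M),
   is surjective *)
Definition ext1_self_zero : Prop :=
  forall g : forall a : arr Q, 'M[k]_(rdim R (src a), rdim R (tgt a)),
    exists f : forall z, 'M[k]_(rdim R z),
      forall a, g a = f (src a) *m mat R a - mat R a *m f (tgt a).

Definition exceptional : Prop :=
  indecomposable (fun _ => True) full_fam /\ ext1_self_zero.

Definition del (W : vert Q -> Prop) (x : vert Q) : vert Q -> Prop :=
  fun z => W z /\ z <> x.

Definition decomp (W : vert Q -> Prop) (x : vert Q) (U : subfam) (n : nat)
    (N : 'I_n -> subfam) : Prop :=
  forall z, del W x z ->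
    (\sum_(i < n) N i z)%VS = U z /\ directv (\sum_(i < n) N i z).

Inductive radiation : (vert Q -> Prop) -> subfam -> vert Q -> Prop :=
| rad_simple W U x :
    is_subrep W U -> W x -> \dim (U x) = 1%N ->
    (forall z, z <> x -> U z = 0%VS) -> radiation W U x
| rad_step W U x n (N : 'I_n -> subfam) (y : 'I_n -> vert Q) :
    indecomposable W U -> W x -> \dim (U x) = 1%N ->
    (exists z, z <> x /\ U z != 0%VS) (* length >= 2 *) ->
    decomp W x U N ->
    (forall i, indecomposable (del W x) (N i)) ->
    (forall i j, i != j -> hom_zero (del W x) (N i) (N j)) ->
    (forall i, adjacent x (y i)) ->
    (forall i, radiation (del W x) (N i) (y i)) ->
    radiation W U x.

Definition castv (z w : vert Q) (e : z = w) (v : 'rV[k]_(rdim R z)) : 'rV[k]_(rdim R w) :=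
  eq_rect z (fun u => 'rV[k]_(rdim R u)) v w e.

Definition basisfam := forall z : vert Q, seq 'rV[k]_(rdim R z).

Inductive rad_basis : (vert Q -> Prop) -> subfam -> forall x : vert Q,
    'rV[k]_(rdim R x) -> basisfam -> Prop :=
| rb_simple W U x b (B : basisfam) :
    is_subrep W U -> W x -> \dim (U x) = 1%N ->
    (forall z, z <> x -> U z = 0%VS) ->
    b \in U x -> b != 0 ->
    B x = [:: b] -> (forall z, z <> x -> B z = [::]) ->
    rad_basis W U b B
| rb_step W U x b (B : basisfam) n (N : 'I_n -> subfam) (y : 'I_n -> vert Q)
    (bi : forall i, 'rV[k]_(rdim R (y i))) (Bi : 'I_n -> basisfam) :
    indecomposable W U -> W x -> \dim (U x) = 1%N ->
    (exists z, z <> x /\ U z != 0%VS) ->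
    decomp W x U N ->
    (forall i, indecomposable (del W x) (N i)) ->
    (forall i j, i != j -> hom_zero (del W x) (N i) (N j)) ->
    (forall i, adjacent x (y i)) ->
    (forall i, radiation (del W x) (N i) (y i)) ->
    b \in U x -> b != 0 ->
    (* arrow alpha_i : x -> y(i): b_i is the N(i)_{y(i)}-component of M_alpha(b) *)
    (forall i a (e1 : src a = x) (e2 : tgt a = y i),
        bi i \in N i (y i) /\
        castv e2 (castv (esym e1) b *m mat R a) - bi i
          \in (\sum_(j < n | j != i) N j (y i))%VS) ->
    (* arrow alpha_i : y(i) -> x: M_alpha(b_i) = b, b_i in N(i)_{y(i)} *)
    (forall i a (e1 : src a = y i) (e2 : tgt a = x),
        bi i \in N i (y i) /\
        castv e2 (castv (esym e1) (bi i) *m mat R a) = b) ->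
    (forall i, rad_basis (del W x) (N i) (bi i) (Bi i)) ->
    perm_eq (B x) (b :: flatten [seq Bi i x | i <- enum 'I_n]) ->
    (forall z, z <> x -> perm_eq (B z) (flatten [seq Bi i z | i <- enum 'I_n])) ->
    rad_basis W U b B.

Definition gamma_vert (B : basisfam) := {z : vert Q & 'I_(size (B z))}.

Definition gamma_arrow (B : basisfam) (e e' : gamma_vert B) : Prop :=
  exists a (i : 'I_(size (B (src a)))) (j : 'I_(size (B (tgt a)))),
    e = existT _ (src a) i /\ e' = existT _ (tgt a) j /\
    coord (in_tuple (B (tgt a))) j (tnth (in_tuple (B (src a))) i *m mat R a) != 0.

Definition joined (B : basisfam) (e e' : gamma_vert B) : Prop :=
  gamma_arrow e e' \/ gamma_arrow e' e.
End Reps.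

(* Let (M, x) be a radiation module with radiation basis B, and let a be the
   arrow between neighbours y, z with d(x, z) = d(x, y) + 1.  Three facts are
   combined.
   1. Partner property (rad_basis_partners), by induction along the recursive
      definition of radiation bases: if a points away from x, every basis
      vector at tgt a is linked in the coefficient quiver to exactly one basis
      vector at src a; if a points towards x, every basis vector at src a is
      linked to exactly one basis vector at tgt a.  Arrows at x are checked
      from the definition of the b_i; every other arrow lies in a single
      summand N(i), whose radiation basis is a block of B, and in a tree this
      summand is the one attached at the neighbour of x through which the
      arrow is reached (component_root), so the induction hypothesis applies.
   2. Maximal rank (ext1_zero_max_rank): Ext^1(M, M) = 0 forces every M_a to
      be injective or surjective.
   3. Linear algebra (section CoefficientPattern): in the coefficient matrix
      of a map of maximal rank with one nonzero entry per column (resp. row),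
      injectivity and surjectivity control the rows (resp. columns).
   In a tree the arrows of the coefficient quiver between y and z are exactly
   the nonzero entries of the coefficient matrix of M_a (joined_coef). *)

From HB Require Import structures.
From mathcomp Require Import all_boot all_order all_algebra.
From Stdlib Require Import Classical ClassicalEpsilon Eqdep.
Import GRing.Theory.
Set Implicit Arguments. Unset Strict Implicit.

Section Walks.
Variable Q : quiver.
Local Notation V := (vert Q).
Local Notation step := (arr Q * bool)%type.
Implicit Types (P : V -> Prop) (u v w x : V) (p q : seq step) (s : step).

Definition visited u p : seq V := u :: map (@st_end Q) p.

Inductive awalk P : V -> V -> seq step -> Prop :=
| awalk_nil u : P u -> awalk P u u [::]
| awalk_cons u w s p :
    u = st_start s -> P u -> awalk P (st_end s) w p -> awalk P u w (s :: p).

Lemma awalk_walk P u v p : awalk P u v p -> walk u v p.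
Proof. by elim=> [u' _|u' w s p' E _ _ IH]; [exact: walk_nil | exact: walk_cons]. Qed.

Lemma awalk_ends P u v p : awalk P u v p -> P u /\ P v.
Proof. by elim=> // u' w s p' _ Pu _ [_ Pw]. Qed.

Lemma awalk_cons_inv P u v s p : awalk P u v (s :: p) ->
  [/\ u = st_start s, P u & awalk P (st_end s) v p].
Proof. by move=> H; inversion H; subst. Qed.

Lemma walk_cons_inv u v s p : walk u v (s :: p) -> u = st_start s /\ walk (st_end s) v p.
Proof. by move=> H; inversion H; subst. Qed.

Lemma awalk_weaken (P P' : V -> Prop) u v p :
  (forall t, P t -> P' t) -> awalk P u v p -> awalk P' u v p.
Proof.
move=> PP'; elim=> [u' Pu|u' w s p' E Pu _ IH]; first exact/awalk_nil/PP'.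
exact: awalk_cons (PP' _ Pu) IH.
Qed.

Lemma awalk_cat P u m v p q : awalk P u m p -> awalk P m v q -> awalk P u v (p ++ q).
Proof. by elim=> // u' w s p' E Pu _ IH /IH; apply: awalk_cons. Qed.

Lemma awalk_cat_inv P u v p q : awalk P u v (p ++ q) ->
  exists m, awalk P u m p /\ awalk P m v q.
Proof.
elim: p u => [|s p IH] u /= H.
  by exists u; split=> //; apply/awalk_nil; case: (awalk_ends H).
have [-> Pu /IH [m [H1 H2]]] := awalk_cons_inv H.
by exists m; split => //; apply: awalk_cons.
Qed.

Lemma awalk_snoc P u p s : awalk P u (st_start s) p -> P (st_end s) ->
  awalk P u (st_end s) (p ++ [:: s]).
Proof.
move=> H Pe; apply: (awalk_cat H); apply: awalk_cons (awalk_nil Pe) => //.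
exact: (awalk_ends H).2.
Qed.

Lemma walk_cat u m v p q : walk u m p -> walk m v q -> walk u v (p ++ q).
Proof. by elim=> // u' w s p' E _ IH /IH; apply: walk_cons. Qed.

Lemma walk_awalk P u v p : walk u v p ->
  (forall t, List.In t (visited u p) -> P t) -> awalk P u v p.
Proof.
elim=> [u'|u' w s p' E _ IH] H; first by apply: awalk_nil; apply: H; left.
by apply: awalk_cons (H _ (or_introl erefl)) (IH _) => // t Ht; apply: H; right.
Qed.

Definition flip s : step := (s.1, ~~ s.2).

Lemma flipK s : flip (flip s) = s.
Proof. by case: s => a c; rewrite /flip /= negbK. Qed.

Lemma st_start_flip s : st_start (flip s) = st_end s.
Proof. by case: s => a []. Qed.

Lemma st_end_flip s : st_end (flip s) = st_start s.
Proof. by case: s => a []. Qed.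

Lemma awalk_rev P u v p : awalk P u v p -> awalk P v u (rev (map flip p)).
Proof.
elim=> [u' Pu|u' w s p' E Pu _ IH]; first exact: awalk_nil.
rewrite map_cons rev_cons -cats1 E -st_end_flip.
by apply: awalk_snoc; rewrite ?st_start_flip // st_end_flip -E.
Qed.

Definition backtrack s1 s2 : Prop := s1.1 = s2.1 /\ s1.2 = ~~ s2.2.

Lemma backtrack_flip s1 s2 : backtrack s1 s2 -> s2 = flip s1.
Proof. by case: s1 s2 => a1 [] [a2 []] [] /= ->. Qed.

Lemma not_reduced_split p : ~ reduced p ->
  exists l1 s1 s2 l2, p = l1 ++ s1 :: s2 :: l2 /\ backtrack s1 s2.
Proof.
elim: p => [|s1 [|s2 p] IH] //= nred.
have [bt|nbt] := classic (backtrack s1 s2); first by exists [::], s1, s2, p.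
have [|l1 [t1 [t2 [l2 [-> bt]]]]] := IH; first by move=> red; apply: nred.
by exists (s1 :: l1), t1, t2, l2.
Qed.

Lemma awalk_reduce P u v p : awalk P u v p -> exists q, awalk P u v q /\ reduced q.
Proof.
elim: {p}(size p) {-2}p (leqnn (size p)) => [|n IH] p size_p H.
  by case: p size_p H => // _ H; exists [::].
have [red|/not_reduced_split [l1 [s1 [s2 [l2 [Ep bt]]]]]] := classic (reduced p).
  by exists p.
subst p; have [m [H1 /awalk_cons_inv [Em _ /awalk_cons_inv [_ _ H2]]]] := awalk_cat_inv H.
rewrite (backtrack_flip bt) st_end_flip -Em in H2.
apply: (IH (l1 ++ l2)); last exact: awalk_cat H1 H2.
by move: size_p; rewrite !size_cat /= !addnS ltnS => /ltnW.
Qed.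

Lemma reduced_cons s q : reduced q ->
  (forall s2 q', q = s2 :: q' -> ~ backtrack s s2) -> reduced (s :: q).
Proof. by case: q => //= s2 q' red nbt; split => //; apply: nbt. Qed.

Lemma reduced_rcons q s : reduced q ->
  (forall l s1, q = l ++ [:: s1] -> ~ backtrack s1 s) -> reduced (q ++ [:: s]).
Proof.
elim: q => [|s1 [|s2 q] IH] //= red nbt; first by split => //; apply: (nbt [::]).
case: red => nbt12 red; split => //.
by apply: IH => // l t E; apply: (nbt (s1 :: l)); rewrite E.
Qed.


Lemma walk_suffix m v p u : walk m v p -> List.In u (visited m p) ->
  exists q, walk u v q /\ size q <= size p.
Proof.
elim=> [m'|m' w s p' E Hw IH] /=.
  by case=> // <-; exists [::]; split => //; exact: walk_nil.
case=> [<-|/IH [q [Hq size_q]]]; first by exists (s :: p'); split => //; exact: walk_cons.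
by exists q; split => //; exact: leqW.
Qed.

Lemma walk_shorten u v p : walk u v p -> ~ List.NoDup (visited u p) ->
  exists q, walk u v q /\ size q < size p.
Proof.
elim=> [u'|u' w s p' E Hw IH] dup.
  by case: dup; constructor; [by [] | constructor].
have [Hin|Hnin] := classic (List.In u' (visited (st_end s) p')).
  by have [q [Hq size_q]] := walk_suffix Hw Hin; exists q.
have [|q [Hq size_q]] := IH; first by move=> nodup; apply: dup; constructor.
by exists (s :: q); split => //; exact: walk_cons.
Qed.

(* s is the last step of a walk from x without repeated vertices;
   in a tree this means that s points away from x. *)
Definition outward x s : Prop :=
  exists p, walk x (st_end s) (p ++ [:: s]) /\ List.NoDup (visited x (p ++ [:: s])).

Lemma outward_cases x s : outward x s ->
  (st_start s = x /\ st_end s <> x) \/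
  exists s1 q, [/\ st_start s1 = x, outward (st_end s1) s,
     awalk (fun t => t <> x) (st_end s1) (st_end s) q,
     st_start s <> x & st_end s <> x].
Proof.
case=> [[|s1 p] [Hw nodup]].
  left; have [E _] := walk_cons_inv Hw; split => // E'.
  by move: nodup; rewrite /visited /= E' => /List.NoDup_cons_iff [+ _]; apply; left.
right; have [E Hw'] := walk_cons_inv Hw.
move: nodup; rewrite /visited map_cons => /List.NoDup_cons_iff [xnin nodup].
have Ha : awalk (fun t => t <> x) (st_end s1) (st_end s) (p ++ [:: s]).
  by apply: (walk_awalk Hw') => t Ht Et; apply: xnin; rewrite -Et.
have [m [_ /awalk_cons_inv [Em Pm _]]] := awalk_cat_inv Ha.
exists s1, (p ++ [:: s]); split => //; first by exists p.
  by rewrite -Em.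
exact: (awalk_ends Ha).2.
Qed.

Lemma outward_of_dist x y z n s : st_start s = y -> st_end s = z ->
  dist x y n -> dist x z n.+1 -> outward x s.
Proof.
move=> Hy Hz [[p [Hp size_p]] _] [_ min_z].
have Hw : walk x z (p ++ [:: s]).
  apply: (walk_cat Hp); apply: walk_cons; first by rewrite Hy.
  by rewrite Hz; exact: walk_nil.
exists p; rewrite Hz; split => //; apply: NNPP => dup.
have [q [Hq size_q]] := walk_shorten Hw dup.
by have := leq_ltn_trans (min_z _ Hq) size_q; rewrite size_cat size_p addn1 ltnn.
Qed.

Section Tree.
Hypothesis tree : is_tree Q.

(* Two neighbours of x that are joined by a walk avoiding x coincide:
   otherwise the walk closes up to a reduced cycle through x. *)
Lemma tree_neighbour_unique x s s' q : st_start s = x -> st_start s' = x ->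
  awalk (fun t => t <> x) (st_end s) (st_end s') q -> st_end s = st_end s'.
Proof.
move=> Hs Hs' Hq; apply: NNPP => ne.
have [r [Hr red_r]] := awalk_reduce Hq.
have r0 : r <> [::] by move=> E; subst r; inversion Hr.
have red : reduced (s :: r ++ [:: flip s']).
  apply: reduced_cons => [|s2 q' E bt].
    apply: reduced_rcons => // l s1 E bt; subst r.
    have [m [_ /awalk_cons_inv [-> Pm _]]] := awalk_cat_inv Hr.
    by apply: Pm; rewrite -Hs' -[s']flipK (backtrack_flip bt) flipK.
  case: r Hr red_r r0 E => // t r' Hr _ _ [Et _]; subst t.
  have [_ _ Hr'] := awalk_cons_inv Hr; have [Px _] := awalk_ends Hr'.
  by apply: Px; rewrite (backtrack_flip bt) st_end_flip.
have cycle : walk x x (s :: r ++ [:: flip s']).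
  apply: walk_cons; first by rewrite Hs.
  apply: (walk_cat (awalk_walk Hr)); apply: walk_cons; first by rewrite st_start_flip.
  by rewrite st_end_flip Hs'; apply: walk_nil.
by have := tree.2 _ _ cycle red.
Qed.

Lemma tree_no_2cycle s1 s2 : st_end s1 = st_start s2 -> st_end s2 = st_start s1 ->
  ~ backtrack s1 s2 -> False.
Proof.
move=> E12 E21 nbt.
have Hc : walk (st_start s1) (st_start s1) [:: s1; s2].
  apply: walk_cons => //; apply: walk_cons => //; rewrite E21; exact: walk_nil.
by have := tree.2 _ _ Hc (conj nbt I).
Qed.

Lemma tree_arrow_unique (a a' : arr Q) : src a = src a' -> tgt a = tgt a' -> a = a'.
Proof.
move=> Es Et; apply: NNPP => ne.
by apply: (tree_no_2cycle (s1 := (a, true)) (s2 := (a', false))) => //= -[].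
Qed.

Lemma tree_no_antiparallel (a a' : arr Q) : src a = tgt a' -> tgt a = src a' -> False.
Proof. by move=> Es Et; apply: (tree_no_2cycle (s1 := (a, true)) (s2 := (a', true))) => // -[]. Qed.

End Tree.

End Walks.

Local Open Scope ring_scope.

Lemma exists_unique_eq (T : Type) (P : T -> Prop) :
  (exists! t, P t) -> forall t1 t2, P t1 -> P t2 -> t1 = t2.
Proof. by case=> t [_ uniq_t] t1 t2 /uniq_t <- /uniq_t <-. Qed.

Section CoefficientPattern.
Variables (k : fieldType) (m n : nat) (M : 'M[k]_(m, n)).
Variables (X : seq 'rV[k]_m) (Y : seq 'rV[k]_n).
Hypotheses (freeX : free X) (spanX : <<X>>%VS = fullv).
Hypotheses (freeY : free Y) (spanY : <<Y>>%VS = fullv).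

Definition coef (i : 'I_(size X)) (j : 'I_(size Y)) : k :=
  coord (in_tuple Y) j (X`_i *m M).

Lemma coord_image (v : 'rV_m) j :
  coord (in_tuple Y) j (v *m M) = \sum_i coord (in_tuple X) i v * coef i j.
Proof.
have Xv : v \in <<in_tuple X>>%VS by rewrite spanX memvf.
rewrite {1}(coord_span Xv) mulmx_suml linear_sum; apply: eq_bigr => i _.
by rewrite -scalemxAl linearZ.
Qed.

Lemma coord_basis (j j' : 'I_(size Y)) : coord (in_tuple Y) j' Y`_j = (j == j')%:R.
Proof. exact: coord_free. Qed.

Lemma image_of_basis (j : 'I_(size Y)) : row_full M -> exists v : 'rV_m, v *m M = Y`_j.
Proof. by case/row_fullP=> D DM; exists (Y`_j *m D); rewrite -mulmxA DM mulmx1. Qed.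

(* An injective map sends no basis vector to 0: no row of coef vanishes. *)
Lemma coef_row_nz : row_free M -> forall i, exists j, coef i j != 0.
Proof.
move=> freeM i; have Xi0 : X`_i != 0 := free_not0 freeX (mem_nth 0 (ltn_ord i)).
suff /existsP[j] : [exists j, coef i j != 0] by exists j.
apply: contraR Xi0 => /existsPn coef0; apply/eqP/(row_free_inj freeM).
have Yv : X`_i *m M \in <<in_tuple Y>>%VS by rewrite spanY memvf.
rewrite mul0mx (coord_span Yv) big1 // => j _.
by move: (coef0 j); rewrite negbK => /eqP; rewrite /coef => ->; rewrite scale0r.
Qed.

(* Some preimage of Y_j has a nonzero Y_j-coordinate of its image. *)
Lemma coef_col_nz : row_full M -> forall j, exists i, coef i j != 0.
Proof.
move=> fullM j; have [v vM] := image_of_basis j fullM.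
suff /existsP[i] : [exists i, coef i j != 0] by exists i.
have one : coord (in_tuple Y) j (v *m M) = 1 by rewrite vM coord_basis eqxx.
apply: contra_neqT (oner_neq0 k) => /existsPn coef0.
rewrite -one coord_image big1 // => i _.
by move/negPn/eqP: (coef0 i) => ->; rewrite mulr0.
Qed.

(* Surjective map, one nonzero entry per column: a row with two nonzero
   entries would make the preimage of one basis vector hit another one. *)
Lemma coef_row_unique : row_full M -> (forall j, exists! i, coef i j != 0) ->
  forall i j1 j2, coef i j1 != 0 -> coef i j2 != 0 -> j1 = j2.
Proof.
move=> fullM col_uniq i j1 j2 nz1 nz2; apply/eqP/negPn/negP => ne12.
have [v vM] := image_of_basis j1 fullM.
have single j : coef i j != 0 ->
    coord (in_tuple Y) j (v *m M) = coord (in_tuple X) i v * coef i j.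
  move=> nz; rewrite coord_image (bigD1 i) //= big1 ?addr0 // => l ne_li.
  have [->|nzl] := eqVneq (coef l j) 0; first by rewrite mulr0.
  by move: ne_li; rewrite (exists_unique_eq (col_uniq j) nzl nz) eqxx.
have := single j1 nz1; rewrite vM coord_basis eqxx => one.
have := single j2 nz2; rewrite vM coord_basis (negbTE ne12) => /esym/eqP.
rewrite mulf_eq0 (negbTE nz2) orbF => /eqP c0.
by move: one; rewrite c0 mul0r => /eqP; rewrite oner_eq0.
Qed.

(* Injective map, one nonzero entry per row: two nonzero entries in a column
   give a nonzero combination of two basis vectors in the kernel. *)
Lemma coef_col_unique : row_free M -> (forall i, exists! j, coef i j != 0) ->
  forall j i1 i2, coef i1 j != 0 -> coef i2 j != 0 -> i1 = i2.
Proof.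
move=> freeM row_uniq j i1 i2 nz1 nz2; apply/eqP/negPn/negP => ne12.
pose v := coef i2 j *: X`_i1 - coef i1 j *: X`_i2.
have vM0 : v *m M = 0.
  have Yv : v *m M \in <<in_tuple Y>>%VS by rewrite spanY memvf.
  rewrite (coord_span Yv) big1 // => j' _.
  rewrite /v mulmxBl -!scalemxAl linearB !linearZ /= -/(coef i1 j') -/(coef i2 j').
  have [->|ne] := eqVneq j' j; first by rewrite mulrC subrr scale0r.
  have zero l : coef l j != 0 -> coef l j' = 0.
    by move=> nz; apply: contraTeq ne => nz'; rewrite negbK (exists_unique_eq (row_uniq l) nz nz').
  by rewrite zero // zero // !mulr0 subrr scale0r.
have v0 : v = 0 by apply: (row_free_inj freeM); rewrite vM0 mul0mx.
have : coord (in_tuple X) i1 v = 0 by rewrite v0 linear0.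
rewrite /v linearB !linearZ /= !coord_free // eqxx eq_sym (negbTE ne12).
by rewrite mulr1 mulr0 subr0 => /eqP; rewrite (negbTE nz2).
Qed.

End CoefficientPattern.

Section VectorCoordinates.
Variables (K : fieldType) (vT : vectType K).
Implicit Types (s X : seq vT) (u v w e : vT).

(* The coordinate of v along the vector w of the sequence s (0 if w is not in
   s); this indexes coordinates by basis vectors rather than by positions,
   which is robust under reordering and concatenating bases. *)
Definition crd s w v : K := \sum_(i < size s | s`_i == w) coord (in_tuple s) i v.

Lemma crd_is_linear s w : linear_for *%R (crd s w).
Proof.
move=> a u v; rewrite /crd mulr_sumr -big_split /=; apply: eq_bigr => i _.
by rewrite linearP.
Qed.

HB.instance Definition _ s w :=
  GRing.isLinear.Build K vT K *%R (crd s w) (crd_is_linear s w).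

Lemma crd_mem s w e : free s -> e \in s -> crd s w e = (e == w)%:R.
Proof.
move=> free_s /(nthP 0) [i lt_i <-]; rewrite /crd.
have coord_i j : coord (in_tuple s) j s`_i = (Ordinal lt_i == j)%:R.
  exact: (coord_free (X := in_tuple s) (Ordinal lt_i) j free_s).
have [<-|ne] := eqVneq s`_i w.
  rewrite (bigD1 (Ordinal lt_i)) //= coord_i eqxx big1 ?addr0 // => j /andP[_ ne_j].
  by rewrite coord_i eq_sym (negbTE ne_j).
rewrite big1 // => j /eqP Ej; rewrite coord_i; case: eqP => // Eij.
by move: ne; rewrite -Ej -Eij eqxx.
Qed.

Lemma crd_nth s (j : 'I_(size s)) v : uniq s -> crd s s`_j v = coord (in_tuple s) j v.
Proof.
move=> uniq_s; rewrite /crd (bigD1 j) //= big1 ?addr0 // => i /andP[/eqP E ne].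
by move: ne; rewrite -(inj_eq val_inj) /= -(nth_uniq 0 (ltn_ord i) (ltn_ord j) uniq_s) E eqxx.
Qed.

Lemma crd_support s w v : crd s w v != 0 -> w \in s.
Proof.
apply: contraR => nin; rewrite /crd big1 // => i /eqP E.
by move: nin; rewrite -E mem_nth.
Qed.

Lemma crd_sub s X w v : free s -> free X -> {subset X <= s} -> v \in <<X>>%VS ->
  crd s w v = crd X w v.
Proof.
move=> free_s free_X sub; rewrite -[X]/(tval (in_tuple X)) => /coord_span ->.
rewrite !linear_sum; apply: eq_bigr => i _.
have Xi : X`_i \in X by rewrite mem_nth.
by rewrite !linearZ /= (crd_mem _ free_s (sub _ Xi)) (crd_mem _ free_X Xi).
Qed.

Lemma directv_disjoint n (N : 'I_n -> {vspace vT}) i j w :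
  directv (\sum_(l < n) N l) -> i != j -> w \in N i -> w \in N j -> w = 0.
Proof.
move=> /directv_sumP dir ne Ni Nj; apply/eqP; rewrite -memv0 -(dir i isT).
by rewrite memv_cap Ni; apply: (subvP (sumv_sup j _ _)); rewrite // eq_sym.
Qed.

Lemma free_span0 s : free s -> <<s>>%VS = 0%VS -> s = [::].
Proof.
case: s => // e s free_s span0; have := free_not0 free_s (mem_head e s).
by rewrite -memv0 -span0 memv_span ?mem_head.
Qed.

Lemma vline_dim1 (U : {vspace vT}) v : v \in U -> v != 0 -> \dim U = 1%N -> <[v]>%VS = U.
Proof.
move=> Uv v0 dimU; apply/eqP; rewrite memvE in Uv.
by have [_ <-] := dimv_leqif_eq Uv; rewrite dim_vline v0 dimU.
Qed.

End VectorCoordinates.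

Section PartnerIndices.
Variables (k : fieldType) (m n : nat) (M : 'M[k]_(m, n)).
Variables (X : seq 'rV[k]_m) (Y : seq 'rV[k]_n).
Hypotheses (uniqX : uniq X) (uniqY : uniq Y).

Lemma col_partner_index :
  (forall w, w \in Y -> exists! u, u \in X /\ crd Y w (u *m M) != 0) ->
  forall j : 'I_(size Y), exists! i : 'I_(size X), coef M i j != 0.
Proof.
move=> partner j.
have [u [[/(nthP 0) [i lt_i Ei] nz] uniq_u]] := partner _ (mem_nth 0 (ltn_ord j)).
exists (Ordinal lt_i); split; first by rewrite /coef /= Ei -crd_nth.
move=> i' nz'; apply/val_inj/eqP; rewrite /= -(nth_uniq 0 lt_i (ltn_ord i') uniqX) Ei.
by rewrite (uniq_u X`_i') ?crd_nth ?mem_nth.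
Qed.

Lemma row_partner_index :
  (forall w, w \in X -> exists! u, u \in Y /\ crd Y u (w *m M) != 0) ->
  forall i : 'I_(size X), exists! j : 'I_(size Y), coef M i j != 0.
Proof.
move=> partner i.
have [u [[/(nthP 0) [j lt_j Ej] nz] uniq_u]] := partner _ (mem_nth 0 (ltn_ord i)).
exists (Ordinal lt_j); split; first by rewrite /coef /= -(crd_nth _ _ uniqY) /= Ej.
move=> j' nz'; apply/val_inj/eqP; rewrite /= -(nth_uniq 0 lt_j (ltn_ord j') uniqY) Ej.
by rewrite (uniq_u Y`_j') ?crd_nth ?mem_nth.
Qed.

End PartnerIndices.

Section MaximalRank.
Variable k : fieldType.

Lemma rank_obstruction m n (M : 'M[k]_(m, n)) : exists G : 'M_(m, n),
  ~~ (row_free M || row_full M) -> exists v : 'rV_m, v *m M = 0 /\ ~~ (v *m G <= M)%MS.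
Proof.
have [_|] := boolP (row_free M || row_full M); first by exists 0.
rewrite negb_or -kermx_eq0 -sub1mx => /andP [/rowV0Pn [v /sub_kermxP vM v0] /row_subPn [i ni]].
have /rV0Pn [j vj] := v0.
exists ((v 0 j)^-1 *: (delta_mx j 0 *m row i 1%:M)) => _; exists v; split => //.
rewrite -scalemxAr mulmxA -colE (mx11_scalar (col j v)) mul_scalar_mx mxE.
by rewrite scalerA mulVf // scale1r.
Qed.

(* Ext^1(M, M) = 0 forces every arrow of M to act with maximal rank: a
   rank-deficient M_a gives a cocycle that is not a coboundary. *)
Lemma ext1_zero_max_rank (Q : quiver) (R : rep k Q) : ext1_self_zero R ->
  forall a, row_free (mat R a) || row_full (mat R a).
Proof.
move=> ext a0; apply: contraT => deficient.
pose G a := @constructive_indefinite_description _ _ (rank_obstruction (mat R a)).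
have [f fE] := ext (fun a => sval (G a)).
have [v [vM outside]] := svalP (G a0) deficient.
by move: outside; rewrite fE mulmxBr !mulmxA vM mul0mx subr0 submxMl.
Qed.

Lemma max_rank_free m n (M : 'M[k]_(m, n)) :
  row_free M || row_full M -> (m <= n)%N -> row_free M.
Proof.
case/orP=> // /eqP rkM le_mn; rewrite /row_free eqn_leq rank_leq_row /= rkM //.
Qed.

Lemma max_rank_full m n (M : 'M[k]_(m, n)) :
  row_free M || row_full M -> (n <= m)%N -> row_full M.
Proof.
case/orP=> // /eqP rkM le_nm; rewrite /row_full eqn_leq rank_leq_col /= rkM //.
Qed.

End MaximalRank.

Lemma flatten_big (T : Type) n (F : 'I_n -> seq T) :
  flatten [seq F i | i <- enum 'I_n] = \big[cat/[::]]_(i < n) F i.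
Proof.
rewrite [index_enum _]unlock -enumT.
by elim: (enum 'I_n) => [|i r IH]; rewrite ?big_nil // big_cons /= IH.
Qed.

Section Representations.
Variables (k : fieldType) (Q : quiver) (R : rep k Q).
Local Notation V z := 'rV[k]_(rdim R z).

Lemma castv_mem (U : subfam R) t t' (e : t = t') (v : V t) :
  (castv e v \in U t') = (v \in U t).
Proof. by case: t' / e. Qed.

Lemma castvK t t' (e : t = t') (v : V t) : castv (esym e) (castv e v) = v.
Proof. by case: t' / e. Qed.

Lemma castvB t t' (e : t = t') (u v : V t) : castv e (u - v) = castv e u - castv e v.
Proof. by case: t' / e. Qed.

Lemma castB (B : basisfam R) t t' (e : t = t') : B t' = map (castv e) (B t).
Proof. by case: t' / e; rewrite map_id. Qed.

Lemma subrep_support (W : vert Q -> Prop) (U : subfam R) t (v : V t) :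
  is_subrep W U -> v \in U t -> v != 0 -> W t.
Proof.
move=> [U0 _] Uv v0; apply: NNPP => nWt.
by move: Uv; rewrite U0 // memv0 (negbTE v0).
Qed.

(* The support of an indecomposable representation is connected: splitting U
   into its part on the vertices reachable from y0 inside W and the rest
   gives a decomposition into subrepresentations. *)
Lemma indecomposable_connected (W : vert Q -> Prop) (U : subfam R) y0 t :
  indecomposable W U -> U y0 != 0%VS -> U t != 0%VS -> exists q, awalk W y0 t q.
Proof.
move=> [[U0 Uarr] [_ indec]] Uy0 Ut.
pose reach u := exists q, awalk W y0 u q.
have [sel selP] : {sel : vert Q -> bool & forall u, reflect (reach u) (sel u)}.
  exists (fun u => if excluded_middle_informative (reach u) then true else false).
  by move=> u; case: excluded_middle_informative; constructor.
pose U1 : subfam R := fun u => if sel u then U u else 0%VS.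
pose U2 : subfam R := fun u => if sel u then 0%VS else U u.
have zero_arr a (v : V (src a)) (S : {vspace V (tgt a)}) : v \in 0%VS -> v *m mat R a \in S.
  by rewrite memv0 => /eqP ->; rewrite mul0mx mem0v.
have sub1 : is_subrep W U1.
  split=> [u nWu|a Ws Wt v]; first by rewrite /U1 U0 //; case: (sel u).
  rewrite /U1; case: (selP (src a)) => [[q Hq]|_]; last exact: zero_arr.
  case: (selP (tgt a)) => [_|[]]; first exact: Uarr.
  by exists (q ++ [:: (a, true)]); exact: (awalk_snoc (s := (a, true)) Hq Wt).
have sub2 : is_subrep W U2.
  split=> [u nWu|a Ws Wt v]; first by rewrite /U2 U0 //; case: (sel u).
  rewrite /U2; case: (selP (src a)) => [_|nreach]; first exact: zero_arr.
  case: (selP (tgt a)) => [[q Hq]|_]; last exact: Uarr.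
  by case: nreach; exists (q ++ [:: (a, false)]); exact: (awalk_snoc (s := (a, false)) Hq Ws).
have dec u : W u -> (U1 u + U2 u)%VS = U u /\ directv (U1 u + U2 u).
  move=> _; rewrite /U1 /U2; case: (sel u).
    by split; [rewrite addv0 | apply/directv_addP; rewrite capv0].
  by split; [rewrite add0v | apply/directv_addP; rewrite cap0v].
have [U1_0|U2_0] := indec U1 U2 sub1 sub2 dec.
  move: (U1_0 y0); rewrite /U1; case: (selP y0) => [_ Uy00|[]].
    by move: Uy0; rewrite Uy00 eqxx.
  exists [::]; apply: awalk_nil; apply: NNPP => nW.
  by move: Uy0; rewrite U0 // eqxx.
by move: (U2_0 t); rewrite /U2; case: (selP t) => // _ Ut0; move: Ut; rewrite Ut0 eqxx.
Qed.

Definition is_basis (U : subfam R) (B : basisfam R) : Prop :=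
  forall z, free (B z) /\ <<B z>>%VS = U z.

Definition linked (B : basisfam R) (a : arr Q) (u : V (src a)) (w : V (tgt a)) : bool :=
  crd (B (tgt a)) w (u *m mat R a) != 0.

Definition out_partners (B : basisfam R) x (a : arr Q) : Prop :=
  outward x (a, true) -> forall w, w \in B (tgt a) ->
    exists! u, u \in B (src a) /\ linked B u w.

Definition in_partners (B : basisfam R) x (a : arr Q) : Prop :=
  outward x (a, false) -> forall w, w \in B (src a) ->
    exists! u, u \in B (tgt a) /\ linked B w u.

Section RadiationBasisStep.
Variables (W : vert Q -> Prop) (U : subfam R) (x : vert Q) (b : V x) (B : basisfam R).
Variables (n : nat) (N : 'I_n -> subfam R) (y : 'I_n -> vert Q).
Variables (bi : forall i, V (y i)) (Bi : 'I_n -> basisfam R).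
Hypotheses (U_sub : is_subrep W U) (dimUx : \dim (U x) = 1%N) (decU : decomp W x U N).
Hypothesis N_indec : forall i, indecomposable (del W x) (N i).
Hypothesis adj : forall i, adjacent x (y i).
Hypotheses (Ub : b \in U x) (b0 : b != 0).
Hypothesis out_root : forall i a (e1 : src a = x) (e2 : tgt a = y i),
  bi i \in N i (y i) /\
  castv e2 (castv (esym e1) b *m mat R a) - bi i \in (\sum_(j < n | j != i) N j (y i))%VS.
Hypothesis in_root : forall i a (e1 : src a = y i) (e2 : tgt a = x),
  bi i \in N i (y i) /\ castv e2 (castv (esym e1) (bi i) *m mat R a) = b.
Hypothesis Bi_basis : forall i, is_basis (N i) (Bi i).
Hypothesis Bi_root : forall i, Bi i (y i) = [:: bi i].
Hypothesis B_root : perm_eq (B x) (b :: flatten [seq Bi i x | i <- enum 'I_n]).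
Hypothesis B_off : forall z, z <> x -> perm_eq (B z) (flatten [seq Bi i z | i <- enum 'I_n]).

Lemma block_outside i z : ~ del W x z -> Bi i z = [::].
Proof.
move=> ndz; apply: free_span0 (Bi_basis i z).1 _.
by rewrite (Bi_basis i z).2; apply: (N_indec i).1.1.
Qed.

Lemma basis_root : B x = [:: b].
Proof.
apply: perm_small_eq => //; move: B_root; rewrite flatten_big big1 // => i _.
by apply: block_outside => -[].
Qed.

Lemma step_basis : is_basis U B.
Proof.
move=> z; have [->|zx] := classic (z = x).
  by rewrite basis_root seq1_free b0 span_seq1 (vline_dim1 Ub).
have [Wz|nWz] := classic (W z); last first.
  move: (B_off zx); rewrite flatten_big big1 => [/perm_nilP ->|i _].
    by rewrite nil_free span_nil U_sub.1.
  by apply: block_outside => -[].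
rewrite (perm_free (B_off zx)) (eq_span (perm_mem (B_off zx))) flatten_big span_bigcat.
have [sumN dirN] := decU (conj Wz zx).
have spanBi i : <<Bi i z>>%VS = N i z by exact: (Bi_basis i z).2.
rewrite (eq_bigr _ (fun i _ => spanBi i)) sumN; split => //.
apply: bigcat_free => [|i _]; last exact: (Bi_basis i z).1.
apply/directv_sumP => i _; move/directv_sumP: dirN => dirN.
by rewrite spanBi (eq_bigr _ (fun j _ => spanBi j)); exact: dirN.
Qed.

Lemma block_sub i t : {subset Bi i t <= B t}.
Proof.
have [->|tx] := classic (t = x); first by rewrite block_outside // => -[].
move=> w Biw; rewrite (perm_mem (B_off tx)); apply/flatten_mapP.
by exists i; rewrite ?mem_enum.
Qed.

Lemma block_cover t w : t <> x -> w \in B t -> exists i, w \in Bi i t.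
Proof. by move=> tx; rewrite (perm_mem (B_off tx)) => /flatten_mapP [i _ Biw]; exists i. Qed.

Lemma block_vec i t w : w \in Bi i t -> [/\ w != 0, w \in N i t & del W x t].
Proof.
move=> Biw; have w0 := free_not0 (Bi_basis i t).1 Biw.
have Nw : w \in N i t by rewrite -(Bi_basis i t).2 memv_span.
by split => //; exact: subrep_support (N_indec i).1 Nw w0.
Qed.

Lemma block_crd i t w v : v \in N i t -> crd (B t) w v = crd (Bi i t) w v.
Proof.
move=> Nv; apply: crd_sub; [exact: (step_basis t).1 | exact: (Bi_basis i t).1 |
  exact: block_sub | by rewrite (Bi_basis i t).2].
Qed.

Lemma block_unique i j t w : w \in Bi i t -> w \in Bi j t -> i = j.
Proof.
move=> Biw Bjw; have [w0 Niw dt] := block_vec Biw; have [_ Njw _] := block_vec Bjw.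
apply/eqP/negPn/negP => ne.
by move: w0; rewrite (directv_disjoint (decU dt).2 ne Niw Njw) eqxx.
Qed.

Lemma crd_other_blocks i t w v : w \in Bi i t ->
  v \in (\sum_(j < n | j != i) N j t)%VS -> crd (B t) w v = 0.
Proof.
move=> Biw /memv_sumP [vs Nvs ->]; rewrite linear_sum big1 //= => j ji.
rewrite (block_crd _ (Nvs j ji)); apply/eqP; apply: contraTT ji => /crd_support Bjw.
by rewrite negbK (block_unique Bjw Biw).
Qed.

Hypothesis tree : is_tree Q.

Lemma component_nonzero i t w : w \in Bi i t -> N i t != 0%VS.
Proof.
move=> Biw; have [w0 Nw _] := block_vec Biw.
by apply: contraNneq w0 => N0; rewrite -memv0 -N0.
Qed.

Lemma component_root i s0 t : st_start s0 = x ->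
  (exists q, awalk (fun v => v <> x) (st_end s0) t q) -> N i t != 0%VS ->
  y i = st_end s0.
Proof.
move=> s0x [q Hq] Nt.
have Nyi : N i (y i) != 0%VS by apply: (component_nonzero (w := bi i)); rewrite Bi_root mem_head.
have [q1 Hq1] := indecomposable_connected (N_indec i) Nyi Nt.
have Hq1x := awalk_weaken (fun v (dv : del W x v) => dv.2) Hq1.
have [s' [s'x s'y]] : exists s', st_start s' = x /\ st_end s' = y i.
  by have [a' [[E1 E2]|[E1 E2]]] := adj i; [exists (a', true) | exists (a', false)].
have := tree_neighbour_unique tree s'x s0x; rewrite s'y; apply.
exact: awalk_cat Hq1x (awalk_rev Hq).
Qed.


(* An arrow a : x -> t: the only basis vector at x is b, and b *m M_a is
   b_i plus a vector of the other summands, so it is linked to b_i only. *)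
Lemma root_out a : src a = x -> tgt a <> x -> forall w, w \in B (tgt a) ->
  exists! u, u \in B (src a) /\ linked B u w.
Proof.
move=> ax tx w Bw; have [i Biw] := block_cover tx Bw.
have e : tgt a = y i.
  apply/esym/(component_root (s0 := (a, true))) => //; last exact: component_nonzero Biw.
  by exists [::]; apply: awalk_nil.
have Ew : w = castv (esym e) (bi i).
  by move: Biw; rewrite (castB (Bi i) (esym e)) Bi_root mem_seq1 => /eqP.
have [_ rest] := out_root ax e.
rewrite -(castv_mem (fun t => \sum_(j < n | j != i) N j t)%VS (esym e)) in rest.
rewrite castvB castvK -Ew in rest.
have B_src : B (src a) = [:: castv (esym ax) b] by rewrite (castB B (esym ax)) basis_root.
exists (castv (esym ax) b); split; last by move=> u []; rewrite B_src mem_seq1 => /eqP.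
split; first by rewrite B_src mem_head.
rewrite /linked -(subrK w (_ *m _)) linearD /= (crd_other_blocks Biw rest) add0r.
by rewrite (crd_mem _ (step_basis _).1 Bw) eqxx oner_neq0.
Qed.

(* An arrow a : t -> x maps b_i to b, the only basis vector at x. *)
Lemma root_in a : tgt a = x -> src a <> x -> forall w, w \in B (src a) ->
  exists! u, u \in B (tgt a) /\ linked B w u.
Proof.
move=> ax sx w Bw; have [i Biw] := block_cover sx Bw.
have e : src a = y i.
  apply/esym/(component_root (s0 := (a, false))) => //; last exact: component_nonzero Biw.
  by exists [::]; apply: awalk_nil.
have Ew : w = castv (esym e) (bi i).
  by move: Biw; rewrite (castB (Bi i) (esym e)) Bi_root mem_seq1 => /eqP.
have wM : w *m mat R a = castv (esym ax) b.
  by have [_ <-] := in_root e ax; rewrite castvK Ew.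
have B_tgt : B (tgt a) = [:: castv (esym ax) b] by rewrite (castB B (esym ax)) basis_root.
exists (castv (esym ax) b); split; last by move=> u []; rewrite B_tgt mem_seq1 => /eqP.
split; first by rewrite B_tgt mem_head.
by rewrite /linked wM (crd_mem _ (step_basis _).1) ?eqxx ?oner_neq0 // B_tgt mem_head.
Qed.

(* An arrow further out lies in a single summand N i, where the claim holds
   by induction; links in B between vectors of that block are links in Bi i,
   and vectors of different blocks are never linked. *)
Lemma nonroot_out a s1 q : st_start s1 = x -> outward (st_end s1) (a, true) ->
  awalk (fun t => t <> x) (st_end s1) (tgt a) q -> src a <> x -> tgt a <> x ->
  (forall i, out_partners (Bi i) (y i) a) ->
  forall w, w \in B (tgt a) -> exists! u, u \in B (src a) /\ linked B u w.
Proof.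
move=> s1x out1 Hq sx tx IH w Bw; have [i Biw] := block_cover tx Bw.
have [_ _ dt] := block_vec Biw.
have e : y i = st_end s1.
  by apply: component_root s1x _ (component_nonzero Biw); exists q.
rewrite -e in out1; have [u [[Biu lu] uniq_u]] := IH i out1 w Biw.
have lift j u' : u' \in Bi j (src a) -> linked B u' w = linked (Bi j) u' w.
  move=> Bju'; have [_ Nu' ds'] := block_vec Bju'.
  by rewrite /linked (block_crd _ ((N_indec j).1.2 _ ds' dt _ Nu')).
exists u; split; first by split; [exact: block_sub Biu | rewrite (lift i)].
move=> u' [Bu' lu']; have [j Bju'] := block_cover sx Bu'.
rewrite (lift j) // in lu'; have ji := block_unique (crd_support lu') Biw.
by subst j; apply: uniq_u.
Qed.

Lemma nonroot_in a s1 q : st_start s1 = x -> outward (st_end s1) (a, false) ->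
  awalk (fun t => t <> x) (st_end s1) (src a) q -> src a <> x -> tgt a <> x ->
  (forall i, in_partners (Bi i) (y i) a) ->
  forall w, w \in B (src a) -> exists! u, u \in B (tgt a) /\ linked B w u.
Proof.
move=> s1x out1 Hq sx tx IH w Bw; have [i Biw] := block_cover sx Bw.
have [_ Nw ds] := block_vec Biw.
have e : y i = st_end s1.
  by apply: component_root s1x _ (component_nonzero Biw); exists q.
rewrite -e in out1; have [u [[Biu lu] uniq_u]] := IH i out1 w Biw.
have [_ _ dt] := block_vec Biu.
have lift u' : linked B w u' = linked (Bi i) w u'.
  by rewrite /linked (block_crd _ ((N_indec i).1.2 _ ds dt _ Nw)).
exists u; split; first by split; [exact: block_sub Biu | rewrite lift].
by move=> u' [_ lu']; rewrite lift in lu'; apply: uniq_u; split => //; exact: crd_support lu'.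
Qed.

Lemma step_partners :
  (forall i a, out_partners (Bi i) (y i) a /\ in_partners (Bi i) (y i) a) ->
  forall a, out_partners B x a /\ in_partners B x a.
Proof.
move=> IH a; split => /outward_cases [[ax far_x]|[s1 [q [s1x out1 Hq near_x far_x]]]].
- exact: root_out.
- by apply: (nonroot_out s1x out1 Hq near_x far_x) => i; case: (IH i a).
- exact: root_in.
- by apply: (nonroot_in s1x out1 Hq far_x near_x) => i; case: (IH i a).
Qed.

End RadiationBasisStep.

Lemma rad_basis_is_basis W U x (b : V x) B :
  rad_basis W U b B -> is_basis U B /\ B x = [:: b].
Proof.
elim=> {W U x b B} [W U x b B _ _ dimUx U_off Ub b0 Bx B_off|
  W U x b B n N y bi Bi U_indec _ dimUx _ decU N_indec _ _ _ Ub b0 _ _ _ IH B_root B_off].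
  split => // z; have [->|zx] := classic (z = x).
    by rewrite Bx seq1_free b0 span_seq1 (vline_dim1 Ub).
  by rewrite B_off // U_off // nil_free span_nil.
have U_sub := U_indec.1; have Bi_basis i := (IH i).1.
by split; [apply: (step_basis (b := b)) | apply: basis_root]; eassumption.
Qed.

Lemma rad_basis_partners W U x (b : V x) B : is_tree Q ->
  rad_basis W U b B -> forall a, out_partners B x a /\ in_partners B x a.
Proof.
move=> tree; elim=> {W U x b B} [W U x b B _ _ _ _ _ _ _ B_off a|
  W U x b B n N y bi Bi U_indec _ dimUx _ decU N_indec _ adj _ Ub b0 out_root in_root
  Bi_rb IH B_root B_off].
  by split => /outward_cases [[_ far_x]|[_ [_ [_ _ _ _ far_x]]]] w; rewrite B_off.
have U_sub := U_indec.1.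
have Bi_basis i := (rad_basis_is_basis (Bi_rb i)).1.
have Bi_root i := (rad_basis_is_basis (Bi_rb i)).2.
by apply: (step_partners (b := b) (bi := bi)); eassumption.
Qed.

End Representations.

Section CoefficientQuiver.
Variables (k : fieldType) (Q : quiver) (R : rep k Q) (B : basisfam R).
Hypothesis tree : is_tree Q.

(* In a tree, the only arrow from src a to tgt a is a itself, and there is
   none back; so the arrows of the coefficient quiver between these two
   vertices are given by the nonzero coefficients of M_a. *)
Lemma joined_coef (a : arr Q) i j :
  joined (existT _ (src a) i : gamma_vert B) (existT _ (tgt a) j) <->
  coef (mat R a) i j != 0.
Proof.
split=> [[]|nz]; last by left; exists a, i, j; do 2!split => //; rewrite (tnth_nth 0).
  move=> [a' [i' [j' [E1 [E2 nz]]]]].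
  have /= Es := f_equal (@projT1 _ _) E1; have /= Et := f_equal (@projT1 _ _) E2.
  have Ea := tree_arrow_unique tree (esym Es) (esym Et).
  subst a'; rewrite (inj_pair2 _ _ _ _ _ E1) (inj_pair2 _ _ _ _ _ E2).
  by move: nz; rewrite (tnth_nth 0).
move=> [a' [i' [j' [E1 [E2 _]]]]].
have /= Es := f_equal (@projT1 _ _) E1; have /= Et := f_equal (@projT1 _ _) E2.
by case: (tree_no_antiparallel tree (esym Es) (esym Et)).
Qed.

Lemma joined_sym (e e' : gamma_vert B) : joined e e' <-> joined e' e.
Proof. by split; case; [right | left | right | left]. Qed.

End CoefficientQuiver.

Section ArrowLinks.
Variables (k : fieldType) (Q : quiver) (R : rep k Q) (B : basisfam R).
Hypotheses (tree : is_tree Q) (B_basis : is_basis (full_fam R) B).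
Hypothesis max_rank : forall a, row_free (mat R a) || row_full (mat R a).

Let free_B t : free (B t) := (B_basis t).1.
Let span_B t : <<B t>>%VS = fullv := (B_basis t).2.

Definition links_between (y z : vert Q) : Prop :=
  [/\ (forall j : 'I_(size (B z)),
         exists! j' : 'I_(size (B y)),
           joined (existT _ z j : gamma_vert B) (existT _ y j')),
      ((rdim R y <= rdim R z)%N ->
         forall j' : 'I_(size (B y)), exists j : 'I_(size (B z)),
           joined (existT _ z j : gamma_vert B) (existT _ y j')) &
      ((rdim R z <= rdim R y)%N ->
         forall (j' : 'I_(size (B y))) (j1 j2 : 'I_(size (B z))),
           joined (existT _ z j1 : gamma_vert B) (existT _ y j') ->
           joined (existT _ z j2 : gamma_vert B) (existT _ y j') -> j1 = j2)].

(* Arrow a : y -> z: every column of the coefficient matrix of M_a has a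
   single nonzero entry, and maximal rank controls the rows. *)
Lemma links_forward (a : arr Q) :
  (forall j : 'I_(size (B (tgt a))), exists! i : 'I_(size (B (src a))), coef (mat R a) i j != 0) ->
  links_between (src a) (tgt a).
Proof.
move=> cols.
have J j i : joined (existT _ (tgt a) j : gamma_vert B) (existT _ (src a) i) <->
    coef (mat R a) i j != 0.
  by rewrite joined_sym (joined_coef (B := B) tree).
split.
- move=> j; have [i [nz uniq_i]] := cols j.
  by exists i; split=> [|i' /J]; [exact/J | exact: uniq_i].
- move=> le j'; have rf := max_rank_free (max_rank a) le.
  by have [j nz] := coef_row_nz (free_B _) (span_B _) rf j'; exists j; apply/J.
- move=> le j' j1 j2 /J nz1 /J nz2; have rf := max_rank_full (max_rank a) le.
  exact: coef_row_unique (span_B _) (free_B _) rf cols j' j1 j2 nz1 nz2.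
Qed.

(* Arrow a : z -> y: every row of the coefficient matrix of M_a has a
   single nonzero entry, and maximal rank controls the columns. *)
Lemma links_backward (a : arr Q) :
  (forall i : 'I_(size (B (src a))), exists! j : 'I_(size (B (tgt a))), coef (mat R a) i j != 0) ->
  links_between (tgt a) (src a).
Proof.
move=> rows; have J := joined_coef (B := B) tree (a := a).
split.
- move=> i; have [j [nz uniq_j]] := rows i.
  by exists j; split=> [|j' /J]; [exact/J | exact: uniq_j].
- move=> le j'; have rf := max_rank_full (max_rank a) le.
  by have [i nz] := coef_col_nz (span_B _) (free_B _) rf j'; exists i; apply/J.
- move=> le j' i1 i2 /J nz1 /J nz2; have rf := max_rank_free (max_rank a) le.
  exact: coef_col_unique (free_B _) (span_B _) rf rows j' i1 i2 nz1 nz2.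
Qed.

End ArrowLinks.

Unset Implicit Arguments.

Theorem proposition3 (k : fieldType) (Q : quiver) (R : rep k Q)
    (x : vert Q) (b : 'rV[k]_(rdim R x)) (B : basisfam R) (y z : vert Q) :
  is_tree Q -> locally_finite Q -> fin_dim R ->
  radiation (fun _ => True) (full_fam R) x ->
  exceptional R ->
  rad_basis (fun _ => True) (full_fam R) b B ->
  adjacent y z ->
  (exists n, dist x y n /\ dist x z n.+1) ->
  [/\ (forall j : 'I_(size (B z)),
         exists! j' : 'I_(size (B y)),
           joined (existT _ z j : gamma_vert B) (existT _ y j')),
      ((rdim R y <= rdim R z)%N ->
         forall j' : 'I_(size (B y)), exists j : 'I_(size (B z)),
           joined (existT _ z j : gamma_vert B) (existT _ y j')) &
      ((rdim R z <= rdim R y)%N ->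
         forall (j' : 'I_(size (B y))) (j1 j2 : 'I_(size (B z))),
           joined (existT _ z j1 : gamma_vert B) (existT _ y j') ->
           joined (existT _ z j2 : gamma_vert B) (existT _ y j') -> j1 = j2)].
Proof.
move=> tree _ _ _ [_ ext] rb [a adj] [n [dist_y dist_z]].
have B_basis := (rad_basis_is_basis rb).1.
have uniq_B t := free_uniq (B_basis t).1.
have max_rank := ext1_zero_max_rank ext.
have [out_a in_a] := rad_basis_partners tree rb a.
case: adj => [[ya za]|[za ya]].
- have out : outward x (a, true) := outward_of_dist (s := (a, true)) ya za dist_y dist_z.
  subst y z; apply: (links_forward tree B_basis max_rank).
  exact: col_partner_index (uniq_B _) (uniq_B _) (out_a out).
- have inw : outward x (a, false) := outward_of_dist (s := (a, false)) ya za dist_y dist_z.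
  subst y z; apply: (links_backward tree B_basis max_rank).
  exact: row_partner_index (uniq_B _) (in_a inw).
Qed.
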